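(* Let $h\ge 0$ and $0\le i\le h$, and let $g_i^{(h)}(z)=\sum_{n\ge0}b^{(h)}_{n,i}z^n$, where $b^{(h)}_{n,i}$ is the number of reversed partial ternary paths of length $n$ ending at level $i$ all of whose ordinates are at most $h$. Then $$(-1)^i g_i^{(h)}(z)=\frac{d_{h-i}}{d_{h+1}}\,w_i-z^2\,\frac{d_{h-i-1}}{d_{h+1}}\,w_{i-1},$$ where $\sum_{j\ge0}d_jX^j=\dfrac{1}{1-X+z^3X^3}$, $\sum_{n\ge 0}w_nX^n=\dfrac{1}{1-zX^2+z^3X^3}$, and $w_{-1}=0$, $d_{-1}=0$.
   Context: A reversed partial ternary path of length $n$ is a lattice path $(0,c_0),\dots,(n,c_n)$ with $c_0=0$, steps $(1,2)$ or $(1,-1)$, and all $c_j\ge0$; it ends at level $c_n$. *)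

From HB Require Import structures.
From mathcomp Require Import all_boot all_order all_algebra.
Set Implicit Arguments. Unset Strict Implicit. Unset Printing Implicit Defensive.
Import Order.TTheory GRing.Theory Num.Theory.
Local Open Scope ring_scope.

(* A step is encoded by a bool: true = (1,2), false = (1,-1). *)
Definition step (b : bool) : int := if b then Posz 2 else Negz 0.

Definition height (s : seq bool) : int := \sum_(b <- s) step b.

Definition bounded_path (h : nat) (s : seq bool) : bool :=
  all (fun k => (0 <= height (take k s)) && (height (take k s) <= h%:Z))
      (iota 0 (size s).+1).

Definition bcount (h n i : nat) : nat :=
  #|[set t : n.-tuple bool | bounded_path h t && (height t == i%:Z)]|.

(* Coefficients c_0..c_n of the formal power series p / q (series given by
   coefficient functions), valid when q 0 = 1:
   c_n = p_n - sum_{k=1}^n q_k c_{n-k}. *)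
Fixpoint fps_div_seq (R : ringType) (p q : nat -> R) (n : nat) : seq R :=
  match n with
  | 0 => [:: p 0%N]
  | n'.+1 =>
      let cs := fps_div_seq p q n' in
      rcons cs (p n - \sum_(1 <= k < n.+1) q k * nth 0 cs (n - k)%N)
  end.

Definition fps_div (R : ringType) (p q : nat -> R) (n : nat) : R :=
  nth 0 (fps_div_seq p q n) n.

(* Polynomials in X with coefficients in Z[z]; the inner variable is z. *)
Definition z : {poly int} := 'X.
Definition Ddenom : {poly {poly int}} := 1 - 'X + (z ^+ 3)%:P * 'X^3.
Definition Wdenom : {poly {poly int}} := 1 - z%:P * 'X^2 + (z ^+ 3)%:P * 'X^3.

Definition dpoly (j : nat) : {poly int} :=
  fps_div (fun k => (k == 0%N)%:R) (fun k => Ddenom`_k) j.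
Definition wpoly (n : nat) : {poly int} :=
  fps_div (fun k => (k == 0%N)%:R) (fun k => Wdenom`_k) n.

Definition dz (j : int) : {poly int} :=
  match j with Posz m => dpoly m | Negz _ => 0 end.
Definition wz (j : int) : {poly int} :=
  match j with Posz m => wpoly m | Negz _ => 0 end.

(* Write F_j for (-1)^j g_j^{(h)}, extended by 0 outside 0 <= j <= h.  Splitting
   a path according to its last step gives, for 0 <= j <= h,
     F_j = [j = 0] + z (F_{j-2} - F_{j+1}).
   The recurrences d_m = [m = 0] + d_{m-1} - z^3 d_{m-3} and
   w_m = [m = 0] + z w_{m-2} - z^3 w_{m-3} show that the numerators
   P_j = d_{h-j} w_j - z^2 d_{h-j-1} w_{j-1} satisfy the same system with [j = 0]
   replaced by [j = 0] d_{h+1}, and vanish outside 0 <= j <= h.  Comparing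
   coefficients by induction on the degree gives d_{h+1} F_j = P_j, and d_{h+1}
   has constant term 1. *)

From HB Require Import structures.
From mathcomp Require Import all_boot all_order all_algebra.
From mathcomp Require Import zify ring.
Set Implicit Arguments. Unset Strict Implicit. Unset Printing Implicit Defensive.
Import Order.TTheory GRing.Theory Num.Theory.
Local Open Scope ring_scope.

Lemma big_nat_vanish (V : nmodType) (F : nat -> V) m a b :
  (m <= a <= b)%N -> (forall k, (a <= k < b)%N -> F k = 0) ->
  \sum_(m <= k < b) F k = \sum_(m <= k < a) F k.
Proof.
case/andP=> ma ab F0; rewrite (big_cat_nat ma ab) /= [X in _ + X]big1_seq ?addr0 //.
by move=> k /andP[_]; rewrite mem_index_iota; apply: F0.
Qed.

Section FpsDiv.
Variables (R : nzRingType) (p q : nat -> R).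

Lemma size_fps_div_seq n : size (fps_div_seq p q n) = n.+1.
Proof. by elim: n => [|n IH] //=; rewrite size_rcons IH. Qed.

Lemma nth_fps_div_seq n m : (m <= n)%N -> nth 0 (fps_div_seq p q n) m = fps_div p q m.
Proof.
elim: n => [|n IH]; first by rewrite leqn0 => /eqP ->.
rewrite leq_eqVlt => /predU1P[-> //|lt_mn].
by rewrite /= nth_rcons size_fps_div_seq lt_mn IH.
Qed.

Lemma fps_divE n :
  fps_div p q n = p n - \sum_(1 <= k < n.+1) q k * fps_div p q (n - k).
Proof.
case: n => [|n]; first by rewrite big_geq // subr0.
rewrite /fps_div /= nth_rcons size_fps_div_seq ltnn eqxx; congr (_ - _).
by apply: eq_big_nat => k /andP[k1 _]; rewrite nth_fps_div_seq //; lia.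
Qed.

Lemma fps_div_uniq (e : nat -> R) n : q 0%N = 1 ->
  (forall m, (m <= n)%N -> \sum_(0 <= k < m.+1) q k * e (m - k)%N = p m) ->
  e n = fps_div p q n.
Proof.
move=> q0; elim/ltn_ind: n => n IH conv_e.
rewrite fps_divE -(conv_e n (leqnn n)) big_ltn // q0 mul1r subn0.
suff -> : \sum_(1 <= k < n.+1) q k * fps_div p q (n - k) =
          \sum_(1 <= k < n.+1) q k * e (n - k)%N by rewrite addrK.
apply: eq_big_nat => k /andP[k1 kn]; rewrite IH //; first by rewrite -subn_gt0 subKn.
by move=> m le_m; apply: conv_e; rewrite (leq_trans le_m) // leq_subr.
Qed.

Definition fps_divz (m : int) : R := if m is Posz k then fps_div p q k else 0.

Lemma fps_divz_neg m : m < 0 -> fps_divz m = 0.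
Proof. by case: m. Qed.

Lemma fps_div_rec d n : (forall k, (d < k)%N -> q k = 0) ->
  fps_div p q n = p n - \sum_(1 <= k < d.+1) q k * fps_divz (n%:Z - k%:Z).
Proof.
move=> q_gt_d; rewrite fps_divE; congr (_ - _).
pose F k := q k * fps_divz (n%:Z - k%:Z).
transitivity (\sum_(1 <= k < maxn n.+1 d.+1) F k).
  rewrite (@big_nat_vanish _ F 1 n.+1) ?leq_maxl //.
    by apply: eq_big_nat => k /andP[_ kn]; rewrite /F subzn.
  by move=> k /andP[nk _]; rewrite /F fps_divz_neg ?mulr0 //; lia.
rewrite (@big_nat_vanish _ F 1 d.+1) ?leq_maxr //.
by move=> k /andP[dk _]; rewrite /F q_gt_d ?mul0r.
Qed.

End FpsDiv.

Lemma coef_Ddenom k : Ddenom`_k =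
  if k == 0%N then 1 else if k == 1%N then -1 else if k == 3%N then z ^+ 3 else 0.
Proof.
rewrite /Ddenom coefD coefB coef1 coefX coefCM coefXn.
by case: k => [|[|[|[|k]]]] /=; rewrite ?mulr0 ?mulr1 ?subr0 ?sub0r ?add0r ?addr0 ?subrr.
Qed.

Lemma coef_Wdenom k : Wdenom`_k =
  if k == 0%N then 1 else if k == 2%N then - z else if k == 3%N then z ^+ 3 else 0.
Proof.
rewrite /Wdenom coefD coefB coef1 !coefCM !coefXn.
by case: k => [|[|[|[|k]]]] /=; rewrite ?mulr0 ?mulr1 ?subr0 ?sub0r ?add0r ?addr0 ?subrr.
Qed.

Lemma dzE m : dz m = fps_divz (fun k => (k == 0%N)%:R) (fun k => Ddenom`_k) m.
Proof. by case: m. Qed.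

Lemma wzE m : wz m = fps_divz (fun k => (k == 0%N)%:R) (fun k => Wdenom`_k) m.
Proof. by case: m. Qed.

Lemma dz_neg m : m < 0 -> dz m = 0.
Proof. by case: m. Qed.

Lemma wz_neg m : m < 0 -> wz m = 0.
Proof. by case: m. Qed.

Lemma dz_rec (m : int) : 0 <= m ->
  dz m = (m == 0)%:R + dz (m - 1) - z ^+ 3 * dz (m - 3).
Proof.
case: m => // m _; rewrite /= /dpoly (@fps_div_rec _ _ _ 3); last first.
  by move=> k; rewrite coef_Ddenom; case: k => [|[|[|[|k]]]].
by rewrite big_ltn // big_ltn // big_ltn // big_geq // !coef_Ddenom /= !dzE; ring.
Qed.

Lemma wz_rec (m : int) : 0 <= m ->
  wz m = (m == 0)%:R + z * wz (m - 2) - z ^+ 3 * wz (m - 3).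
Proof.
case: m => // m _; rewrite /= /wpoly (@fps_div_rec _ _ _ 3); last first.
  by move=> k; rewrite coef_Wdenom; case: k => [|[|[|[|k]]]].
by rewrite big_ltn // big_ltn // big_ltn // big_geq // !coef_Wdenom /= !wzE; ring.
Qed.

Lemma dpoly_coef0 m : (dpoly m)`_0 = 1.
Proof.
elim/ltn_ind: m => -[|m] IH; first by rewrite /dpoly /fps_div /= coef1.
have /= -> := dz_rec (m := m.+1%:Z) isT.
by rewrite coefB coefD coefC /z coefXnM /= subr0 IH // subn1.
Qed.

Definition numer_poly (h : nat) (j : int) : {poly int} :=
  dz (h%:Z - j) * wz j - 'X^2 * dz (h%:Z - j - 1) * wz (j - 1).

Lemma numer_poly_out h j : ~~ (0 <= j <= h%:Z) -> numer_poly h j = 0.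
Proof.
rewrite negb_and -!ltNge /numer_poly => /orP[j_lt0 | h_lt_j].
  by rewrite !wz_neg ?mulr0 ?subr0 //; lia.
by rewrite !dz_neg ?mulr0 ?mul0r ?subr0 //; lia.
Qed.

Lemma numer_poly_rec h j : 0 <= j <= h%:Z ->
  numer_poly h j =
  dpoly h.+1 *+ (j == 0) + 'X * (numer_poly h (j - 2) - numer_poly h (j + 1)).
Proof.
case/andP=> j_ge0 j_le_h; rewrite /numer_poly; set a := h%:Z - j.
have -> : h%:Z - (j - 2) - 1 = a + 1 by rewrite /a; ring.
have -> : h%:Z - (j - 2) = a + 2 by rewrite /a; ring.
have -> : h%:Z - (j + 1) - 1 = a - 2 by rewrite /a; ring.
have -> : h%:Z - (j + 1) = a - 1 by rewrite /a; ring.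
have -> : j - 2 - 1 = j - 3 by ring.
have -> : j + 1 - 1 = j by ring.
have -> : dpoly h.+1 *+ (j == 0) = dz (a + 1) *+ (j == 0).
  by case: eqP => [j0|_]; rewrite ?mulr0n ?mulr1n // /a j0 subr0 -PoszD addn1.
have Da2 : dz (a + 2) = dz (a + 1) - z ^+ 3 * dz (a - 1).
  rewrite dz_rec; last by rewrite /a; lia.
  have -> : (a + 2 == 0) = false by apply/eqP; rewrite /a; lia.
  by rewrite add0r; congr (dz _ - _ * dz _); ring.
have Da1 : dz (a + 1) = dz a - z ^+ 3 * dz (a - 2).
  rewrite dz_rec; last by rewrite /a; lia.
  have -> : (a + 1 == 0) = false by apply/eqP; rewrite /a; lia.
  by rewrite add0r; congr (dz _ - _ * dz _); ring.
have Wj1 : wz (j + 1) = z * wz (j - 1) - z ^+ 3 * wz (j - 2).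
  rewrite wz_rec; last lia.
  have -> : (j + 1 == 0) = false by apply/eqP; lia.
  by rewrite add0r; congr (_ * wz _ - _ * wz _); ring.
rewrite Da2 Da1 Wj1 [wz j]wz_rec // -mulr_natl /z; ring.
Qed.

Lemma big_tuple_rcons (R : Type) (idx : R) (op : Monoid.com_law idx)
    (T : finType) n (F : seq T -> R) :
  \big[op/idx]_(u : n.+1.-tuple T) F u =
  \big[op/idx]_(t : n.-tuple T) \big[op/idx]_(x : T) F (rcons t x).
Proof.
have rcons_bij : bijective (fun tx : n.-tuple T * T => [tuple of rcons tx.1 tx.2]).
  apply: inj_card_bij; last by rewrite card_prod !card_tuple expnSr.
  by move=> [t x] [t' x'] /(congr1 val)/rcons_inj[/val_inj-> ->].
by rewrite pair_big (reindex _ (onW_bij _ rcons_bij)).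
Qed.

Lemma height_rcons s b : height (rcons s b) = height s + step b.
Proof. by rewrite /height -cats1 big_cat big_seq1. Qed.

Lemma bounded_path_rcons h s b : bounded_path h (rcons s b) =
  bounded_path h s && (0 <= height (rcons s b) <= h%:Z).
Proof.
rewrite /bounded_path size_rcons -addn1 iotaD all_cat all_seq1 add0n.
rewrite take_oversize ?size_rcons //; congr (_ && _).
apply: eq_in_all => k; rewrite mem_iota add0n => /andP[_ lt_k].
by rewrite -cats1 takel_cat.
Qed.

Lemma bounded_path_height h s : bounded_path h s -> 0 <= height s <= h%:Z.
Proof.
case/lastP: s => [|s b]; first by rewrite /height big_nil.
by rewrite bounded_path_rcons => /andP[].
Qed.

Definition bcountz (h n : nat) (x : int) : nat :=
  #|[set t : n.-tuple bool | bounded_path h t && (height t == x)]|.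

Lemma bcountzE h n x :
  bcountz h n x = (\sum_(t : n.-tuple bool) (bounded_path h t && (height t == x)))%N.
Proof.
by rewrite /bcountz -sum1_card big_mkcond; apply: eq_bigr => t _; rewrite inE; case: ifP.
Qed.

Lemma bcountz0 h x : bcountz h 0 x = (x == 0).
Proof.
rewrite bcountzE (eq_bigr (fun=> (bounded_path h [::] && (height [::] == x) : nat))).
  by rewrite sum_nat_const card_tuple mul1n /bounded_path /= /height big_nil eq_sym.
by move=> t _; rewrite tuple0.
Qed.

Lemma bcountzS h n x : bcountz h n.+1 x =
  if 0 <= x <= h%:Z then (bcountz h n (x - 2) + bcountz h n (x + 1))%N else 0%N.
Proof.
rewrite !bcountzE (big_tuple_rcons _ _ (fun s => (bounded_path h s && (height s == x) : nat))).
case: ifPn => x_in.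
  rewrite -big_split; apply: eq_bigr => t _; rewrite big_bool.
  suff last_step b : bounded_path h (rcons t b) && (height (rcons t b) == x) =
                     bounded_path h t && (height t == x - step b) by rewrite !last_step.
  rewrite bounded_path_rcons height_rcons -[height t == _](inj_eq (addIr (step b))) subrK.
  by case: eqP => [->|_]; rewrite ?x_in ?andbT ?andbF.
apply: big1 => t _; rewrite big_bool.
suff no_path b : bounded_path h (rcons t b) && (height (rcons t b) == x) = false.
  by rewrite !no_path.
by apply: contraNF x_in => /andP[/bounded_path_height + /eqP <-].
Qed.

Lemma bcountz_out h n x : ~~ (0 <= x <= h%:Z) -> bcountz h n x = 0%N.
Proof.
case: n => [|n] x_out; last by rewrite bcountzS (negbTE x_out).
by rewrite bcountz0; case: eqP x_out => // ->.
Qed.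

Definition sbcount (h : nat) (j : int) (n : nat) : int :=
  (-1) ^+ `|j| * (bcountz h n j)%:Z.

Lemma sbcount0 h j : sbcount h j 0 = (j == 0)%:R.
Proof. by rewrite /sbcount bcountz0; case: eqP => [->|_]; rewrite ?mulr0 ?mulr1. Qed.

Lemma sbcount_out h j n : ~~ (0 <= j <= h%:Z) -> sbcount h j n = 0.
Proof. by move=> j_out; rewrite /sbcount bcountz_out ?mulr0. Qed.

Lemma sbcountS h j n : 0 <= j <= h%:Z ->
  sbcount h j n.+1 = sbcount h (j - 2) n - sbcount h (j + 1) n.
Proof.
move=> j_in; rewrite /sbcount bcountzS j_in PoszD mulrDr.
case: j j_in => // m _; congr (_ + _).
  case: m => [|[|m]]; try by rewrite bcountz_out ?mulr0.
  rewrite (_ : m.+2%:Z - 2 = m); last lia.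
  by rewrite !exprS !mulN1r opprK.
by rewrite -PoszD addn1 exprS mulN1r mulNr opprK.
Qed.

Lemma coef0_numer_poly h j : (numer_poly h j)`_0 = (j == 0)%:R.
Proof.
have [j_in|j_out] := boolP (0 <= j <= h%:Z).
  by rewrite numer_poly_rec // coefD coefMn coefXM dpoly_coef0 addr0.
by rewrite numer_poly_out // coef0; case: eqP j_out => // ->.
Qed.

Lemma coefS_numer_poly h j n : 0 <= j <= h%:Z ->
  (numer_poly h j)`_n.+1 =
  (dpoly h.+1)`_n.+1 *+ (j == 0) + ((numer_poly h (j - 2))`_n - (numer_poly h (j + 1))`_n).
Proof. by move=> j_in; rewrite numer_poly_rec // coefD coefMn coefXM coefB. Qed.

Lemma dpoly_sbcount_conv h j n :
  \sum_(0 <= k < n.+1) (dpoly h.+1)`_k * sbcount h j (n - k) = (numer_poly h j)`_n.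
Proof.
elim: n j => [|n IH] j.
  by rewrite big_nat1 dpoly_coef0 mul1r sbcount0 coef0_numer_poly.
have [j_in|j_out] := boolP (0 <= j <= h%:Z); last first.
  by rewrite numer_poly_out // coef0 big1 // => k _; rewrite sbcount_out ?mulr0.
rewrite coefS_numer_poly // -!IH -sumrB big_nat_recr //= subnn sbcount0 mulr_natr addrC.
congr (_ + _); apply: eq_big_nat => k /andP[_ le_kn].
by rewrite subSn // sbcountS // mulrBr.
Qed.

Theorem mainTheorem6 (h i : nat) (hi : (i <= h)%N) (n : nat) :
  (-1) ^+ i * (bcount h n i)%:Z =
  fps_div
    (fun k => (dz (h%:Z - i%:Z) * wz i%:Z
               - 'X^2 * dz (h%:Z - i%:Z - 1) * wz (i%:Z - 1))`_k)
    (fun k => (dpoly h.+1)`_k) n.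
Proof.
have -> : (-1) ^+ i * (bcount h n i)%:Z = sbcount h i n by [].
apply: fps_div_uniq => [|m _]; first exact: dpoly_coef0.
exact: dpoly_sbcount_conv.
Qed.
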